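(* Let $(u,x)$ be an enhanced state of an oriented link diagram $D$ with $q(u,x)=j$. Then $|Z_-(u,x)|=\frac{j_{\max}(D)-j}{2}-\Phi(u)$.
   Context: $D$ is an oriented link diagram with ordered crossings $c_1,\dots,c_n$, of which $n_+$ are positive and $n_-$ negative. A state is $u\in\{0,1\}^n$, $|u|=\sum u_i$, $\vec1=(1,\dots,1)$; $u\succ_i v$ means $u_i=1,v_i=0$, $u_j=v_j$ otherwise. $D(u)$ is the result of smoothing each $c_i$ by its Kauffman $u_i$-smoothing, with circle set $Z(u)$; the chord $e_i(u)$ records crossing $c_i$, and passing from $u$ to $v$ with $u\succ_i v$ is surgery along $e_i(u)$, a merging if the endpoints of $e_i(u)$ lie on two different circles. $\Phi(u)$ is the number of mergings in any chain $\vec1=u_0\succ u_1\succ\cdots\succ u_k=u$ (independent of the chain). An enhancement of $u$ is a map $x\colon Z(u)\to\{+1,-1\}$; $Z_\pm(u,x)$ are the circles labelled $\pm1$. The quantum grading is $q(u,x)=n_+-2n_-+|u|+|Z_+(u,x)|-|Z_-(u,x)|$, and $j_{\max}(D)$ is the maximum of $q(u,x)$ over all enhanced states. *)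

(* Combinatorial model of an oriented link diagram as a
   4-valent plane map (rotation system) with over/under and orientation data,
   plus some crossingless circle components. *)
From HB Require Import structures.
From mathcomp Require Import all_boot all_order all_algebra.
Set Implicit Arguments. Unset Strict Implicit. Unset Printing Implicit Defensive.
Import Order.TTheory GRing.Theory Num.Theory.

(* Darts (half-edges) at the n crossings: (i, p) is the p-th of the four
   ends at crossing c_i, p = 0,1,2,3 listed COUNTERCLOCKWISE around c_i in
   the plane; by convention positions 0 and 2 are the ends of the OVER strand
   (positions 1 and 3 those of the under strand). *)
Definition dart (n : nat) := ('I_n * 'I_4)%type.

Definition rot4 (p : 'I_4) : 'I_4 := inord ((p + 1) %% 4).
Definition rot_dart n (d : dart n) : dart n := (d.1, rot4 d.2).
Definition pos2 (p : 'I_4) : 'I_4 := inord ((p + 2) %% 4).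

Record link_diagram := LinkDiagram {
  ncross : nat;
  nfree : nat;                               (* crossingless circle components *)
  edge : dart ncross -> dart ncross;
  orient : dart ncross -> bool;              (* true: the strand leaves the
                                                crossing through this dart *)
  edge_invol : involutive edge;
  edge_nofix : forall d, edge d != d;
  orient_edge : forall d, orient (edge d) = ~~ orient d;
  orient_straight : forall i p, orient (i, pos2 p) = ~~ orient (i, p);
  (* planarity (Euler): #faces = V + 2 * #connected components, i.e. every
     connected component of the 4-valent map has genus 0 *)
  planar : fcard (fun d => rot_dart (edge d)) predT
           = ncross + 2 * n_comp (fun d e => (e == edge d) || (e == rot_dart d)) predT
}.

Section Diagram.
Variable D : link_diagram.
Local Notation n := (ncross D).
Local Notation H := (dart n).

(* crossing signs: over strand outgoing at 0 or 2, under outgoing at 1 or 3;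
   positive iff the under direction is the over direction rotated ccw by 90
   degrees, i.e. iff orient (i,0) == orient (i,1). *)
Definition positive_crossing (i : 'I_n) : bool := @orient D (i, inord 0) == @orient D (i, inord 1).
Definition npos : nat := #|[set i | positive_crossing i]|.
Definition nneg : nat := #|[set i | ~~ positive_crossing i]|.

(* states u in {0,1}^n (true = 1) *)
Definition state := {ffun 'I_n -> bool}.
Definition vec1 : state := [ffun => true].
Definition size_state (u : state) : nat := #|[set i | u i]|.

Definition succ_at (i : 'I_n) (u v : state) : bool :=
  u i && ~~ v i && [forall j, (j != i) ==> (u j == v j)].

(* Kauffman smoothings: with the over strand at positions 0,2 (ccw labels),
   the A-smoothing (= 0-smoothing) joins ends {1,2} and {3,0}; the
   B-smoothing (= 1-smoothing) joins ends {0,1} and {2,3}. *)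
Definition smooth_partner (b : bool) (p : 'I_4) : 'I_4 :=
  inord (if b then (if odd p then p.-1 else p.+1) else 3 - p).
Definition smooth (u : state) (d : H) : H := (d.1, smooth_partner (u d.1) d.2).

(* D(u): darts linked by edges and by smoothing arcs; its circles are the
   connected components, plus the nfree crossingless circles. *)
Definition adj (u : state) : rel H := fun d e => (e == @edge D d) || (e == smooth u d).
Definition circ (u : state) : finType :=
  ({d : H | roots (adj u) d} + 'I_(nfree D))%type.

(* the chord e_i(u) joins the smoothing arc through (i,0) to the one through
   (i,2); surgery along it is a merging iff these lie on different circles *)
Definition merging (u : state) (i : 'I_n) : bool :=
  ~~ connect (adj u) (i, inord 0) (i, inord 2).

(* enhancements x : Z(u) -> {+1,-1}, encoded with true = +1, false = -1 *)
Definition enhancement (u : state) := {ffun circ u -> bool}.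
Definition Zplus u (x : enhancement u) : nat := #|[pred c | x c]|.
Definition Zminus u (x : enhancement u) : nat := #|[pred c | ~~ x c]|.

Definition qgr (u : state) (x : enhancement u) : int :=
  (npos%:Z - 2 * nneg%:Z + (size_state u)%:Z + (Zplus x)%:Z - (Zminus x)%:Z)%R.

Definition enh_state := {u : state & enhancement u}.

(* maximum of q over all (finitely many, nonempty) enhanced states; the
   starting value is q of the enhanced state (vec1, all +1), which is itself
   one of the values maximized over. *)
Definition jmax : int :=
  \big[Num.max/qgr (u:=vec1) [ffun => true]]_(s : enh_state)
    qgr (tagged s).

(* a chain vec1 = u_0 > u_1 > ... > u_k = u, given as vec1 :: us *)
Definition is_chain (us : seq state) (u : state) : bool :=
  path (fun a b => [exists i, succ_at i a b]) vec1 us && (last vec1 us == u).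

Definition chain_mergings (us : seq state) : nat :=
  count (fun p : state * state => [exists i, succ_at i p.1 p.2 && merging p.1 i])
        (zip (vec1 :: us) us).

End Diagram.

From mathcomp Require Import all_boot all_order all_algebra all_fingroup.
From mathcomp Require Import zify.
Import Order.TTheory GRing.Theory Num.Theory.
Set Implicit Arguments. Unset Strict Implicit. Unset Printing Implicit Defensive.

(* A partial resolution of D keeps each crossing either as a 4-valent vertex
   or smooths it; on the darts it is a ribbon graph whose components are
   linked by edges and by turning at crossings, and whose faces are the cycles
   of d |-> turn (edge d).  Planarity says that the unsmoothed diagram has
   Euler genus 0, and smoothing a crossing never increases the Euler genus.
   In a full resolution D(u) every circle has exactly two faces.  Comparing
   the faces of D(u), of D(v) for u >_i v, and of the resolution in which
   crossing i is kept, the genus bound excludes that surgery along e_i(u)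
   leaves the number of circles unchanged: it drops by one for a merging and
   grows by one otherwise.  Hence |u| + |Z(u)| + 2 Phi(u) does not depend on
   u, the maximum j_max is q(1, +1), and j_max - q(u,x) = 2 (Phi(u) + |Z_-|). *)

Section Components.
Variable T : finType.

Lemma n_comp_roots (e : rel T) : n_comp e predT = #|[set x | roots e x]|.
Proof. by apply: eq_card => x; rewrite !inE andbT. Qed.

(* The extra edges of e only touch the e'-classes of a and b. *)
Lemma n_comp_le_succ (e e' : rel T) (a b : T) :
    connect_sym e -> connect_sym e' ->
    (forall x y, e x y -> connect e' x y ||
       [&& connect e' x a || connect e' x b & connect e' y a || connect e' y b]) ->
  n_comp e' predT <= (n_comp e predT).+1.
Proof.
move=> sym_e sym_e' step.
pose near z := connect e' z a || connect e' z b.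
have {}step x y : e x y -> connect e' x y || near x && near y := step x y.
have near_conn z w : connect e' z w -> near w -> near z.
  by move=> czw /orP[] cw; rewrite /near (connect_trans czw cw) ?orbT.
have conn x y : connect e x y -> connect e' x y || near x && near y.
  have cl : closed e [pred y | connect e' x y || near x && near y].
    apply: intro_closed => // z w /step /orP[czw | /andP[nz nw]] /orP[cxz | /andP[nx nz']].
    - by rewrite inE (connect_trans cxz czw).
    - by rewrite inE nx (near_conn w z) ?orbT // sym_e'.
    - by rewrite inE nw (near_conn x z) ?orbT.
    - by rewrite inE nx nw orbT.
  by move/(closed_connect cl); rewrite !inE connect0 => <-.
rewrite !n_comp_roots (cardsD1 (fingraph.root e' b)) -add1n leq_add ?leq_b1 //.
rewrite -(@card_in_imset _ _ (fingraph.root e)); last first.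
  move=> x y; rewrite !inE => /andP[nxb /eqP rx] /andP[nyb /eqP ry] /eqP.
  rewrite root_connect // => /conn /orP[/(fingraph.rootP sym_e') | /andP[nx ny]].
    by rewrite rx ry.
  have near_root z :
      fingraph.root e' z = z -> z != fingraph.root e' b -> near z -> z = fingraph.root e' a.
    move=> rz nzb /orP[] /(fingraph.rootP sym_e'); rewrite rz // => zb.
    by rewrite zb eqxx in nzb.
  exact: etrans (near_root x rx nxb nx) (esym (near_root y ry nyb ny)).
apply: subset_leq_card; apply/subsetP => _ /imsetP[x _ ->].
by rewrite inE roots_root.
Qed.

End Components.

Section PermOrbits.
Variables (T : finType) (s : {perm T}).
Local Open Scope group_scope.

Lemma fcard_porbits : fcard s predT = #|porbits s|.
Proof.
have sym_s : connect_sym (frel s) by apply: fconnect_sym; apply: perm_inj.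
have fconnect_porbit x y : fconnect s x y = (y \in porbit s x).
  apply/idP/porbitP => [/iter_findex <- | [i ->]]; last by rewrite permX fconnect_iter.
  by exists (findex s x y); rewrite permX.
rewrite n_comp_roots /porbits -(@card_in_imset _ _ (porbit s)); last first.
  move=> x y; rewrite !inE => /eqP rx /eqP ry /eqP.
  by rewrite eq_porbit_mem -fconnect_porbit sym_s => /(fingraph.rootP sym_s); rewrite rx ry.
congr #|pred_of_set _|; apply/setP => O.
apply/imsetP/imsetP => [[x _ ->] | [x _ ->]]; first by exists x.
exists (fingraph.root (frel s) x); first by rewrite inE roots_root.
by apply/eqP; rewrite eq_porbit_mem -fconnect_porbit sym_s connect_root.
Qed.

Lemma mem_porbit_perm x y : y \in porbit s x -> s y \in porbit s x.
Proof. by case/porbitP => k ->; rewrite -permM -expgSr mem_porbit. Qed.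

Lemma porbit_mem_eq x y : y \in porbit s x -> porbit s y = porbit s x.
Proof. by move=> yx; apply/eqP; rewrite eq_porbit_mem. Qed.

Lemma card_porbits_tperm_mul x y : x != y ->
  #|porbits (tperm x y * s)| + (x \notin porbit s y).*2 = #|porbits s| + 1.
Proof. by move=> xy; have := porbits_mul_tperm s x y; rewrite xy. Qed.

Lemma porbit_tperm_mul x y z :
  x \notin porbit s z -> y \notin porbit s z -> porbit (tperm x y * s) z = porbit s z.
Proof.
move=> xz yz.
have iterE k : ((tperm x y * s) ^+ k) z = (s ^+ k) z.
  elim: k => [|k IH]; first by rewrite !expg0.
  rewrite !expgSr !permM IH tpermD //.
    by apply: contraNneq xz => ->; apply: mem_porbit.
  by apply: contraNneq yz => ->; apply: mem_porbit.
by apply/setP => w; apply/porbitP/porbitP => -[k ->]; exists k; rewrite iterE.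
Qed.

End PermOrbits.

Lemma tperm_pair (I J : finType) (i j : I) (a a' p : J) :
  tperm (i, a) (i, a') (j, p) = (j, if j == i then tperm a a' p else p).
Proof.
rewrite !permE /= !xpair_eqE; case: eqVneq => [->|] //=.
by case: (p == a); case: (p == a').
Qed.

Ltac case_I4 p := case: p => [[|[|[|[|?]]]] ?] //=.

Lemma val_smooth_partner b (p : 'I_4) : nat_of_ord (smooth_partner b p) =
  if b then (if odd p then p.-1 else p.+1) else 3 - p.
Proof. by rewrite /smooth_partner inordK //; case: b; case_I4 p. Qed.

Lemma val_rot4 (p : 'I_4) : nat_of_ord (rot4 p) = (p + 1) %% 4.
Proof. by rewrite /rot4 inordK // ltn_pmod. Qed.

Lemma rot4_inj : injective rot4.
Proof.
move=> p q /eqP; rewrite -val_eqE /= !val_rot4 => e; apply/val_inj; move: e.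
by case_I4 p; case_I4 q.
Qed.

Lemma smooth_partnerK b : involutive (smooth_partner b).
Proof. by move=> p; apply/val_inj; rewrite /= !val_smooth_partner; case: b; case_I4 p. Qed.

Lemma smooth_partner_neq b p : smooth_partner b p != p.
Proof. by rewrite -val_eqE /= val_smooth_partner; case: b; case_I4 p. Qed.

Lemma smooth_partnerE b p :
  smooth_partner b p = rot4 (tperm (inord b) (inord (b + 2)) p).
Proof.
apply/val_inj; rewrite /= val_smooth_partner val_rot4.
case: tpermP => [->|->|]; rewrite ?inordK; case: b => //; case_I4 p;
  by [case; apply/val_inj; rewrite /= inordK | move=> _ []; apply/val_inj; rewrite /= inordK].
Qed.

Lemma smooth_partner_inord b k : k < 4 ->
  smooth_partner b (inord k) = inord (if b then (if odd k then k.-1 else k.+1) else 3 - k).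
Proof. by move=> k4; rewrite /smooth_partner inordK. Qed.

Lemma smooth_partner_near b p : [|| p == inord 0, p == inord 2,
  smooth_partner b p == inord 0 | smooth_partner b p == inord 2].
Proof. by rewrite -!val_eqE /= !val_smooth_partner !inordK //; case: b; case_I4 p. Qed.

Lemma rot4_cover p q : exists k, q = iter k rot4 p.
Proof.
exists ((q + 4 - p) %% 4); apply/val_inj.
by case_I4 p; case_I4 q; rewrite ?val_rot4.
Qed.

Definition turn (o : option bool) (p : 'I_4) : 'I_4 :=
  if o is Some b then smooth_partner b p else rot4 p.

Lemma turn_inj o : injective (turn o).
Proof. by case: o => [b|]; [apply: inv_inj; apply: smooth_partnerK | apply: rot4_inj]. Qed.

Section Ribbon.
Variable D : link_diagram.
Local Notation n := (ncross D).
Local Notation X := (dart n).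
Local Open Scope group_scope.

(* [None] keeps the crossing as a 4-valent vertex, [Some b] applies the
   b-smoothing. *)
Definition partial_state := {ffun 'I_n -> option bool}.

Definition unsmoothed : partial_state := [ffun => None].
Definition state_partial (u : state D) : partial_state := [ffun i => Some (u i)].
Definition set_crossing (c : partial_state) (i : 'I_n) (o : option bool) :
  partial_state :=
  [ffun j => if j == i then o else c j].

Lemma edge_inj : injective (@edge D).
Proof. exact: inv_inj (@edge_invol D). Qed.

Definition edge_perm : {perm X} := perm edge_inj.

Lemma edge_permE d : edge_perm d = edge d.
Proof. by rewrite permE. Qed.

Definition turn_dart (c : partial_state) (d : X) : X := (d.1, turn (c d.1) d.2).

Lemma turn_dart_inj c : injective (turn_dart c).
Proof. by move=> [i p] [j q] [/= <-] /turn_inj ->. Qed.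

Definition turn_perm (c : partial_state) : {perm X} := perm (@turn_dart_inj c).

Lemma turn_permE c d : turn_perm c d = turn_dart c d.
Proof. by rewrite permE. Qed.

Definition face_perm (c : partial_state) : {perm X} := edge_perm * turn_perm c.

Lemma face_permE c d : face_perm c d = turn_dart c (edge d).
Proof. by rewrite permM edge_permE turn_permE. Qed.

Definition ribbon (c : partial_state) : rel X :=
  fun d e => (e == edge d) || (e == turn_dart c d).

Definition nfaces (c : partial_state) : nat := #|porbits (face_perm c)|.
Definition ncomps (c : partial_state) : nat := n_comp (ribbon c) predT.
Definition nsmoothed (c : partial_state) : nat := #|[set i | c i != None]|.

(* The ribbon surface of [c] has V = n - s vertices (the unsmoothed crossings)
   and E = 2n - 2s edges (each smoothing arc glues two edges together), so
   this is 2K - (V - E + F), the sum of the Euler genera of its components. *)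
Definition euler_genus (c : partial_state) : int :=
  ((n + 2 * ncomps c)%N%:Z - (nsmoothed c + nfaces c)%N%:Z)%R.

Lemma ribbon_sym c : connect_sym (ribbon c).
Proof.
have eq_ribbon : ribbon c =2 relU (frel (@edge D)) (frel (turn_dart c)).
  by move=> d e; rewrite /ribbon /= ![e == _]eq_sym.
move=> x y; rewrite !(eq_connect eq_ribbon).
by apply: relU_sym; apply: fconnect_sym; [apply: edge_inj | apply: turn_dart_inj].
Qed.

Lemma connect_edge c d : connect (ribbon c) d (edge d).
Proof. by rewrite connect1 // /ribbon eqxx. Qed.

Lemma connect_turn c d : connect (ribbon c) d (turn_dart c d).
Proof. by rewrite connect1 // /ribbon eqxx orbT. Qed.

Lemma connect_face c x y : y \in porbit (face_perm c) x -> connect (ribbon c) x y.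
Proof.
case/porbitP => k ->; elim: k => [|k IH]; first by rewrite expg0 perm1.
rewrite expgSr permM face_permE; apply: connect_trans IH _.
exact: connect_trans (connect_edge _ _) (connect_turn _ _).
Qed.

Section SmoothCrossing.
Variables (c : partial_state) (i : 'I_n) (b : bool).
Hypothesis ci : c i = None.
Local Notation c' := (set_crossing c i (Some b)).

Lemma turn_dart_smooth p : turn_dart c' (i, p) = (i, smooth_partner b p).
Proof. by rewrite /turn_dart /= ffunE eqxx. Qed.

Lemma turn_dart_smooth_neq j p : j != i -> turn_dart c' (j, p) = turn_dart c (j, p).
Proof. by move=> ji; rewrite /turn_dart /= ffunE (negbTE ji). Qed.

Lemma turn_perm_smooth :
  turn_perm c' = tperm (i, inord b) (i, inord (b + 2)) * turn_perm c.
Proof.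
apply/permP => -[j p]; rewrite permM !turn_permE tperm_pair /turn_dart /= ffunE.
by case: eqVneq => [->|] //; rewrite ci /= smooth_partnerE.
Qed.

Lemma face_perm_smooth :
  face_perm c' = tperm (edge (i, inord b)) (edge (i, inord (b + 2))) * face_perm c.
Proof.
apply/permP => d; rewrite /face_perm turn_perm_smooth !permM !edge_permE.
by rewrite (inj_tperm _ _ _ edge_inj) !edge_invol.
Qed.

Lemma connect_unsmoothed_at p q : connect (ribbon c) (i, p) (i, q).
Proof.
have [k ->] := rot4_cover p q; elim: k => [|k IH] //=.
apply: connect_trans IH _.
by have := connect_turn c (i, iter k rot4 p); rewrite /turn_dart /= ci.
Qed.

Lemma connect_smooth_sub : subrel (connect (ribbon c')) (connect (ribbon c)).
Proof.
apply: connect_sub => -[j p] e /orP[/eqP-> | /eqP->]; first exact: connect_edge.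
case: (eqVneq j i) => [->|ji]; first by rewrite turn_dart_smooth connect_unsmoothed_at.
by rewrite turn_dart_smooth_neq // connect_turn.
Qed.

Lemma connect_smooth_near p :
  connect (ribbon c') (i, p) (i, inord 0) || connect (ribbon c') (i, p) (i, inord 2).
Proof.
have arc := connect_turn c' (i, p); rewrite turn_dart_smooth in arc.
by case/or4P: (smooth_partner_near b p) => /eqP e; rewrite -e ?connect0 ?arc ?orbT.
Qed.

Lemma connect_smooth_eq :
    connect (ribbon c') (i, inord 0) (i, inord 2) ->
  connect (ribbon c) =2 connect (ribbon c').
Proof.
move=> c02.
have at_i p q : connect (ribbon c') (i, p) (i, q).
  have to0 r : connect (ribbon c') (i, r) (i, inord 0).
    by case/orP: (connect_smooth_near r) => // /connect_trans; apply; rewrite ribbon_sym.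
  by apply: connect_trans (to0 p) _; rewrite ribbon_sym.
move=> x y; apply/idP/idP; last exact: connect_smooth_sub.
apply: connect_sub x y => -[j p] e /orP[/eqP-> | /eqP->]; first exact: connect_edge.
case: (eqVneq j i) => [->|ji]; first exact: at_i.
by rewrite -turn_dart_smooth_neq // connect_turn.
Qed.

Lemma ncomps_smooth_le : ncomps c' <= (ncomps c).+1.
Proof.
apply: (n_comp_le_succ (a := (i, inord 0)) (b := (i, inord 2))); try exact: ribbon_sym.
move=> [j p] e /orP[/eqP-> | /eqP->]; first by rewrite connect_edge.
case: (eqVneq j i) => [->|ji]; last by rewrite -turn_dart_smooth_neq // connect_turn.
by rewrite !connect_smooth_near orbT.
Qed.

Lemma nsmoothed_smooth : nsmoothed c' = (nsmoothed c).+1.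
Proof.
rewrite /nsmoothed.
have -> : [set j | c' j != None] = i |: [set j | c j != None].
  by apply/setP => j; rewrite !inE ffunE; case: (eqVneq j i) => [->|].
by rewrite cardsU1 inE ci eqxx.
Qed.

Lemma euler_genus_smooth : (euler_genus c' <= euler_genus c)%R.
Proof.
set x := edge (i, inord b); set y := edge (i, inord (b + 2)).
have xy : x != y.
  by rewrite /x /y (inj_eq edge_inj) xpair_eqE eqxx -val_eqE /= !inordK //; case: b.
have F1 := card_porbits_tperm_mul (face_perm c) xy.
rewrite -face_perm_smooth in F1.
rewrite /euler_genus nsmoothed_smooth /nfaces.
have [xy_face | xy_face'] := boolP (x \in porbit (face_perm c) y).
  by have := ncomps_smooth_le; move: F1; rewrite xy_face /=; lia.
(* The smoothing merged two faces, so x and y now lie on a common face of c'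
   and crossing i already links (i, 0) to (i, 2) in c'. *)
have F2 := card_porbits_tperm_mul (face_perm c') xy.
rewrite {1}face_perm_smooth tpermKg in F2.
have xy_face : x \in porbit (face_perm c') y.
  by apply/negPn/negP => xy_face2; move: F1 F2; rewrite xy_face2 xy_face' /=; lia.
have c02 : connect (ribbon c') (i, inord 0) (i, inord 2).
  have cxy : connect (ribbon c') (i, inord (b + 2)) (i, inord b).
    apply: connect_trans (connect_trans (connect_edge _ _) (connect_face xy_face)) _.
    by rewrite ribbon_sym connect_edge.
  have arc k : k < 4 -> connect (ribbon c') (i, inord k)
      (i, inord (if b then (if odd k then k.-1 else k.+1) else 3 - k)).
    by move=> k4; rewrite -smooth_partner_inord // -turn_dart_smooth connect_turn.
  case: b {x y xy F1 xy_face' F2 xy_face} cxy arc => /= cxy arc.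
    apply: connect_trans (arc 0 isT) (connect_trans _ (arc 3 isT)).
    by rewrite ribbon_sym.
  by rewrite ribbon_sym.
rewrite /ncomps -(eq_n_comp (connect_smooth_eq c02)); move: F1 F2.
by rewrite xy_face xy_face' /=; lia.
Qed.

End SmoothCrossing.

Lemma euler_genus_unsmoothed : euler_genus unsmoothed = 0%R.
Proof.
have turnE d : turn_dart unsmoothed d = rot_dart d by rewrite /turn_dart ffunE.
have nfacesE : nfaces unsmoothed = fcard (fun d : X => rot_dart (edge d)) predT.
  by rewrite /nfaces -fcard_porbits; apply: eq_fcard => d; rewrite face_permE turnE.
have ncompsE : ncomps unsmoothed =
    n_comp (fun d e : X => (e == edge d) || (e == rot_dart d)) predT.
  by apply: eq_n_comp; apply: eq_connect => d e; rewrite /ribbon turnE.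
have nsmoothedE : nsmoothed unsmoothed = 0.
  by apply: eq_card0 => j; rewrite !inE ffunE.
by rewrite /euler_genus nfacesE ncompsE nsmoothedE (@planar D) add0n subrr.
Qed.

Lemma euler_genus_le0 c : (euler_genus c <= 0)%R.
Proof.
elim: {c}(nsmoothed c) {-2}c (erefl (nsmoothed c)) => [|k IH] c sc.
  move/eqP: sc; rewrite cards_eq0 => /eqP c0.
  have -> : c = unsmoothed; last by rewrite euler_genus_unsmoothed.
  by apply/ffunP => j; rewrite ffunE; apply/eqP/negPn; move/setP/(_ j): c0; rewrite !inE => ->.
have /card_gt0P[j] : 0 < #|[set j | c j != None]| by rewrite -/(nsmoothed c) sc.
rewrite inE; case cj: (c j) => [b|] // _.
pose c0 := set_crossing c j None.
have c0j : c0 j = None by rewrite ffunE eqxx.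
have ec : c = set_crossing c0 j (Some b).
  by apply/ffunP => l; rewrite !ffunE; case: eqVneq => // ->.
rewrite ec; apply: le_trans (euler_genus_smooth _ c0j) (IH _ _).
by move: sc; rewrite ec nsmoothed_smooth // => -[].
Qed.

Section SmoothedState.
Variable u : state D.
Local Notation c := (state_partial u).
Local Notation f := (face_perm (state_partial u)).

Lemma turn_dart_state d : turn_dart c d = smooth u d.
Proof. by rewrite /turn_dart /smooth ffunE. Qed.

Lemma adj_ribbon : adj u =2 ribbon c.
Proof. by move=> d e; rewrite /adj /ribbon turn_dart_state. Qed.

Lemma smooth_invol : involutive (smooth u).
Proof. by move=> [j p]; rewrite /smooth /= smooth_partnerK. Qed.

Lemma smooth_neq d : smooth u d != d.
Proof. by case: d => j p; rewrite /smooth xpair_eqE eqxx smooth_partner_neq. Qed.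

Lemma edge_face_perm d : edge (f d) = f^-1 (edge d).
Proof.
by apply: (@perm_inj _ f); rewrite permKV !face_permE !turn_dart_state edge_invol smooth_invol.
Qed.

Lemma edge_face_permX k d : edge ((f ^+ k) d) = (f^-1 ^+ k) (edge d).
Proof.
elim: k => [|k IH]; first by rewrite !expg0 !perm1.
by rewrite !expgSr (permM (f ^+ k)) (permM (f^-1 ^+ k)) edge_face_perm IH.
Qed.

Lemma edge_porbit x y : y \in porbit f x -> edge y \in porbit f (edge x).
Proof. by case/porbitP => k ->; rewrite edge_face_permX -porbitV mem_porbit. Qed.

(* Conjugation by [edge] inverts [f]: were edge d = f^k d, the middle of
   this face path would be a fixed point of [edge] (k even) or of
   [smooth u] (k odd). *)
Lemma edge_notin_face d : edge d \notin porbit f d.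
Proof.
apply/negP => /porbitP[k ek].
have mirror j m : m + j = k -> edge ((f ^+ j) d) = (f ^+ m) d.
  by move=> mjk; rewrite edge_face_permX ek -mjk expgD permM expgVn permK.
set m := k./2; have := odd_double_half k; rewrite -addnn; case: (odd k) => /= kE.
  have e1 : (f ^+ m.+1) d = edge ((f ^+ m) d).
    by rewrite -(mirror m.+1 m) ?edge_invol // addnS.
  move: e1; rewrite expgSr permM face_permE turn_dart_state => /eqP.
  by rewrite (negbTE (smooth_neq _)).
by have := @edge_nofix D ((f ^+ m) d); rewrite (mirror m m) ?eqxx.
Qed.

Lemma connect_face_edge x y :
  connect (ribbon c) x y -> (y \in porbit f x) || (y \in porbit f (edge x)).
Proof.
have turn_face z : turn_dart c z = f (edge z) by rewrite face_permE edge_invol.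
have cl : closed (ribbon c) [pred y | (y \in porbit f x) || (y \in porbit f (edge x))].
  apply: intro_closed; first exact: ribbon_sym.
  move=> z w /orP[/eqP-> | /eqP->] /orP[] zf; rewrite inE ?turn_face; apply/orP.
  - by right; apply: edge_porbit.
  - by left; rewrite -[x]edge_invol edge_porbit.
  - by right; apply/mem_porbit_perm/edge_porbit.
  - by left; apply: mem_porbit_perm; rewrite -[x]edge_invol edge_porbit.
by move/(closed_connect cl); rewrite !inE porbit_id => <-.
Qed.

Lemma nfaces_state : nfaces c = (2 * ncomps c)%N.
Proof.
have sym := ribbon_sym c.
pose R := [set r | roots (ribbon c) r].
pose side (rb : X * bool) := porbit f (if rb.2 then edge rb.1 else rb.1).
have side_conn rb d : d \in side rb -> connect (ribbon c) rb.1 d.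
  move/connect_face; case: rb.2 => //; exact: connect_trans (connect_edge _ _).
have face_side d : exists2 rb, rb \in setX R setT & porbit f d = side rb.
  pose r := fingraph.root (ribbon c) d.
  exists (r, d \notin porbit f r).
    by rewrite in_setX in_setT andbT inE; apply: roots_root.
  apply/eqP; rewrite eq_porbit_mem /side /=.
  have /connect_face_edge/orP[dr | df] : connect (ribbon c) r d.
  - by rewrite sym connect_root.
  - by rewrite dr.
  suff /negbTE -> : d \notin porbit f r by [].
  apply/negP => dr; move/negP: (edge_notin_face r); apply.
  by rewrite -(porbit_mem_eq dr) porbit_sym.
rewrite /nfaces; have -> : porbits f = side @: setX R setT.
  apply/setP => O; apply/imsetP/imsetP => [[d _ ->] | [[r b] _ ->]]; first exact: face_side.
  by exists (if b then edge r else r).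
rewrite card_in_imset ?cardsX ?cardsT ?card_bool /ncomps ?n_comp_roots 1?mulnC //.
move=> [r1 b1] [r2 b2]; rewrite !in_setX !inE !andbT => /eqP r1R /eqP r2R eq_side.
have base rb : (if rb.2 then edge rb.1 else rb.1) \in side rb by apply: porbit_id.
have r12 : r1 = r2.
  have base1 : (if b1 then edge r1 else r1) \in side (r2, b2).
    by rewrite -eq_side; apply: (base (r1, b1)).
  rewrite -r1R -r2R; apply/(fingraph.rootP sym).
  apply: connect_trans (side_conn (r1, b1) _ (base (r1, b1))) _.
  by rewrite sym (side_conn _ _ base1).
move: eq_side; rewrite r12 /side; case: b1; case: b2 => //= eq_side.
all: by move/negP: (edge_notin_face r2); case; rewrite -eq_porbit_mem eq_side.
Qed.

Lemma nsmoothed_state : nsmoothed c = n.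
Proof.
rewrite /nsmoothed (_ : [set j | c j != None] = setT) ?cardsT ?card_ord //.
by apply/setP => j; rewrite !inE ffunE.
Qed.

End SmoothedState.

Section Surgery.
Variables (u v : state D) (i : 'I_n).
Hypothesis uv : succ_at i u v.

Let c := set_crossing (state_partial u) i None.
Local Notation linked := (connect (ribbon (state_partial u))).
Local Notation f := (face_perm (state_partial u)).
Local Notation g := (face_perm c).
Local Notation x k := (edge (i, inord k)).

Let ci : c i = None.
Proof. by rewrite ffunE eqxx. Qed.

Lemma state_partial_succ_l : state_partial u = set_crossing c i (Some true).
Proof.
case/andP: uv => /andP[ui _] _.
by apply/ffunP => j; rewrite !ffunE; case: eqVneq => [->|]; rewrite ?ui.
Qed.

Lemma state_partial_succ_r : state_partial v = set_crossing c i (Some false).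
Proof.
case/andP: uv => /andP[_ /negbTE vi] /forallP uv_eq.
apply/ffunP => j; rewrite !ffunE; case: eqVneq => [->|ji]; first by rewrite vi.
by have := uv_eq j; rewrite ji => /eqP ->.
Qed.

Lemma face_perm_succ_l : g = tperm (x 1) (x 3) * f.
Proof. by rewrite state_partial_succ_l face_perm_smooth // tpermKg. Qed.

Lemma face_perm_succ_r : face_perm (state_partial v) = tperm (x 0) (x 2) * g.
Proof. by rewrite state_partial_succ_r face_perm_smooth. Qed.

Lemma face_perm_edge_at k : k < 4 ->
  f (x k) = (i, inord (if odd k then k.-1 else k.+1)).
Proof.
case/andP: uv => /andP[ui _] _ k4.
by rewrite face_permE edge_invol turn_dart_state /smooth /= ui smooth_partner_inord.
Qed.

Lemma merging_linked : merging u i = ~~ linked (i, inord 0) (i, inord 2).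
Proof. by rewrite /merging /linked (eq_connect (adj_ribbon u)). Qed.

Let x13_neq : x 1 != x 3.
Proof. by rewrite (inj_eq edge_inj) xpair_eqE eqxx -val_eqE /= !inordK. Qed.

Let x02_neq : x 0 != x 2.
Proof. by rewrite (inj_eq edge_inj) xpair_eqE eqxx -val_eqE /= !inordK. Qed.

Let linked_sym : connect_sym (ribbon (state_partial u)) := ribbon_sym _.

Let linked_edge k : linked (i, inord k) (x k).
Proof. exact: connect_edge. Qed.

Let linked_arc k : k < 4 ->
  linked (i, inord k) (i, inord (if odd k then k.-1 else k.+1)).
Proof.
by move=> k4; rewrite -face_perm_edge_at // face_permE edge_invol; apply: connect_turn.
Qed.

Let linked_at k l : linked (x k) (x l) -> linked (i, inord k) (i, inord l).
Proof.
move=> kl; apply: connect_trans (linked_edge k) (connect_trans kl _).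
by rewrite linked_sym linked_edge.
Qed.

Let x1_face : x 1 \in porbit f (edge (x 0)).
Proof.
rewrite porbit_sym edge_invol -(face_perm_edge_at (k := 1)) //.
exact/mem_porbit_perm/porbit_id.
Qed.

Lemma face_succ_merging : merging u i ->
  (x 1 \notin porbit f (x 3)) && (x 0 \notin porbit g (x 2)).
Proof.
rewrite merging_linked => not02.
have link13 : ~~ linked (i, inord 1) (i, inord 3).
  apply: contra not02 => l13.
  exact: connect_trans (linked_arc (k := 0) isT) (connect_trans l13 (linked_arc (k := 3) isT)).
have x1_face0 : x 1 \notin porbit f (x 0).
  apply/negP => x1f; move/negP: (edge_notin_face u (x 0)); apply.
  by rewrite -(porbit_mem_eq x1f) (porbit_mem_eq x1_face) porbit_id.
have x3_face0 : x 3 \notin porbit f (x 0).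
  apply: contra not02 => /connect_face/linked_at l03.
  exact: connect_trans l03 (linked_arc (k := 3) isT).
apply/andP; split.
  by apply: contra link13 => /connect_face/linked_at; rewrite linked_sym.
rewrite porbit_sym face_perm_succ_l porbit_tperm_mul //.
by apply: contra not02 => /connect_face/linked_at.
Qed.

(* A chord joining a circle to itself in a non-orientable way would give the
   diagram with crossing i restored a positive Euler genus. *)
Lemma face_succ_untwisted :
  linked (i, inord 0) (i, inord 2) -> x 2 \in porbit f (x 0).
Proof.
move=> l02; have /connect_face_edge/orP[// | twisted] : linked (x 0) (x 2).
  apply: connect_trans (connect_trans _ l02) (linked_edge 2).
  by rewrite linked_sym linked_edge.
have x3_face : x 3 \in porbit f (x 0).
  have := edge_porbit (mem_porbit_perm twisted).
  by rewrite face_perm_edge_at // edge_invol.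
have x13 : x 1 \notin porbit f (x 3).
  rewrite (porbit_mem_eq x3_face); apply/negP => x1f.
  move/negP: (edge_notin_face u (x 0)); apply.
  by rewrite -(porbit_mem_eq x1f) (porbit_mem_eq x1_face) porbit_id.
have Fg := card_porbits_tperm_mul f x13_neq.
rewrite -face_perm_succ_l x13 in Fg.
have Kc : ncomps c = ncomps (state_partial u).
  rewrite state_partial_succ_l in l02 *.
  by rewrite /ncomps; apply: eq_n_comp; apply: connect_smooth_eq ci l02.
have Sc := nsmoothed_state u; rewrite state_partial_succ_l (nsmoothed_smooth _ ci) in Sc.
have := euler_genus_le0 c; have := nfaces_state u.
by rewrite /euler_genus Kc /nfaces; move: Fg Sc; lia.
Qed.

Lemma face_succ_split : ~~ merging u i ->
  (x 1 \in porbit f (x 3)) && (x 0 \in porbit g (x 2)).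
Proof.
rewrite merging_linked negbK => /face_succ_untwisted x2_face.
have x3_face : x 3 \in porbit f (edge (x 0)).
  have := edge_porbit (mem_porbit_perm x2_face).
  by rewrite face_perm_edge_at.
have not_face0 y : y \in porbit f (edge (x 0)) -> y \notin porbit f (x 0).
  move=> ye; apply/negP => y0; move/negP: (edge_notin_face u (x 0)); apply.
  by rewrite -(porbit_mem_eq y0) (porbit_mem_eq ye) porbit_id.
apply/andP; split; first by rewrite (porbit_mem_eq x3_face).
by rewrite porbit_sym face_perm_succ_l porbit_tperm_mul ?not_face0.
Qed.

Lemma ncomps_succ :
  ncomps (state_partial v) + (merging u i).*2 = (ncomps (state_partial u)).+1.
Proof.
have Fg := card_porbits_tperm_mul f x13_neq.
have Fh := card_porbits_tperm_mul g x02_neq.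
rewrite -face_perm_succ_l in Fg; rewrite -face_perm_succ_r in Fh.
have := nfaces_state u; have := nfaces_state v; rewrite /nfaces.
case: (boolP (merging u i)) => [/face_succ_merging | /face_succ_split] /andP[f13 g02];
  by move: Fg Fh; rewrite f13 g02; lia.
Qed.

End Surgery.

End Ribbon.

Section Grading.
Variable D : link_diagram.
Local Notation n := (ncross D).
Local Notation ncircles u := (ncomps (state_partial u)).

Lemma card_circ (u : state D) : #|circ u| = ncircles u + nfree D.
Proof.
rewrite card_sum card_ord card_sig /ncomps n_comp_roots; congr (_ + _).
by apply: eq_card => d; rewrite !inE (eq_roots (adj_ribbon u)).
Qed.

Lemma Zplus_Zminus (u : state D) (x : enhancement u) : Zplus x + Zminus x = #|circ u|.
Proof. by rewrite -(cardC [pred c | x c]); congr (_ + _); apply: eq_card. Qed.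

Lemma size_state_succ (u v : state D) i :
  succ_at i u v -> size_state u = (size_state v).+1.
Proof.
case/andP=> /andP[ui /negbTE vi] /forallP uv; rewrite /size_state.
have -> : [set j | u j] = i |: [set j | v j].
  apply/setP => j; rewrite !inE; case: (eqVneq j i) => [->|ji] //.
  by have := uv j; rewrite ji => /eqP ->.
by rewrite cardsU1 inE vi.
Qed.

Lemma succ_at_inj (u v : state D) i j : succ_at i u v -> succ_at j u v -> j = i.
Proof.
case/andP=> /andP[_ _] /forallP uv /andP[/andP[uj /negbTE vj] _].
by apply/eqP; apply: contraTT (uv j) => ->; rewrite uj vj.
Qed.

Lemma size_ncircles_succ (u v : state D) i :
  succ_at i u v -> size_state v + ncircles v <= size_state u + ncircles u.
Proof. by move=> uv; have := ncomps_succ uv; rewrite (size_state_succ uv); lia. Qed.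

Definition mergings_along (s : state D) (us : seq (state D)) : nat :=
  count (fun p : state D * state D => [exists i, succ_at i p.1 p.2 && merging p.1 i])
        (zip (s :: us) us).

Lemma size_ncircles_path (s : state D) us :
    path (fun a b => [exists i, succ_at i a b]) s us ->
  size_state (last s us) + ncircles (last s us) + (mergings_along s us).*2
  = size_state s + ncircles s.
Proof.
elim: us s => [|w us IH] s /=; first by rewrite addn0.
case/andP => /existsP[i sw] /IH; rewrite /mergings_along /= -/(mergings_along w us).
have -> : [exists j, succ_at j s w && merging s j] = merging s i.
  apply/existsP/idP => [[j /andP[sj mj]] | mi]; last by exists i; rewrite sw.
  by rewrite -(succ_at_inj sw sj).
by have := ncomps_succ sw; rewrite (size_state_succ sw); lia.
Qed.

Lemma size_vec1 : size_state (vec1 D) = n.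
Proof.
rewrite /size_state (_ : [set j | vec1 D j] = setT) ?cardsT ?card_ord //.
by apply/setP => j; rewrite !inE ffunE.
Qed.

Lemma size_state_lt (u : state D) j : ~~ u j -> size_state u < n.
Proof.
move=> uj; rewrite /size_state -[X in _ < X]card_ord; apply: proper_card.
by apply/properP; split; [apply/subsetP | exists j; rewrite ?inE].
Qed.

Lemma size_ncircles_le (u : state D) :
  size_state u + ncircles u <= n + ncircles (vec1 D).
Proof.
have full (w : state D) : (fun j => ~~ w j) =1 xpred0 ->
    size_state w + ncircles w <= n + ncircles (vec1 D).
  move=> all1; rewrite (_ : w = vec1 D) ?size_vec1 //.
  by apply/ffunP => l; rewrite ffunE; apply: negbFE.
elim: {u}(n - size_state u) {-2}u (erefl (n - size_state u)) => [|k IH] u zeros;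
  have [j uj | /full //] := pickP (fun j => ~~ u j).
  by have := size_state_lt uj; lia.
pose u' : state D := [ffun l => (l == j) || u l].
have su : succ_at j u' u.
  rewrite /succ_at ffunE eqxx uj /=; apply/forallP => l.
  by rewrite ffunE; case: (eqVneq l j) => [->|]; rewrite ?eqxx.
apply: leq_trans (size_ncircles_succ su) (IH u' _).
by move: zeros; rewrite (size_state_succ su); lia.
Qed.

Local Notation q_top := (qgr (u := vec1 D) [ffun => true]).

Lemma qgr_top : q_top =
  ((npos D)%:Z - 2 * (nneg D)%:Z + (n + ncircles (vec1 D) + nfree D)%N%:Z)%R.
Proof.
rewrite /qgr size_vec1.
have -> : Zplus (u := vec1 D) [ffun => true] = #|circ (vec1 D)|.
  by apply: eq_card => c; rewrite !inE ffunE.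
have -> : Zminus (u := vec1 D) [ffun => true] = 0.
  by apply: eq_card0 => c; rewrite !inE ffunE.
by rewrite card_circ subr0 !PoszD !addrA.
Qed.

Lemma qgr_le_top (u : state D) (x : enhancement u) : (qgr x <= q_top)%R.
Proof.
have := Zplus_Zminus x; have := size_ncircles_le u.
by rewrite qgr_top /qgr card_circ => size_le circles; lia.
Qed.

Lemma jmax_top : jmax D = q_top.
Proof.
apply/eqP; rewrite eq_le; apply/andP; split.
  apply: (big_ind (fun y => y <= q_top)%R); first exact: lexx.
    by move=> a b ha hb; rewrite ge_max ha hb.
  by move=> [w y] _; apply: qgr_le_top.
apply: (big_rec (fun y => q_top <= y)%R); first exact: lexx.
by move=> s y _ IH; rewrite le_max IH orbT.
Qed.

End Grading.

Unset Implicit Arguments.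
Set Strict Implicit.

Theorem proposition4p4 (D : link_diagram) (u : state D) (x : enhancement u)
    (j : int) (us : seq (state D)) :
  qgr x = j -> is_chain us u ->
  ((Zminus x)%:Z = ((jmax D - j) %/ 2)%Z - (chain_mergings us)%:Z)%R.
Proof.
move=> <- /andP[chain /eqP last_u].
have := size_ncircles_path chain; rewrite last_u size_vec1.
have := Zplus_Zminus x; rewrite card_circ.
have -> : chain_mergings us = mergings_along (vec1 D) us by [].
move=> circles path_inv.
have -> : (jmax D - qgr x = (mergings_along (vec1 D) us + Zminus x)%N%:Z * 2)%R.
  by rewrite jmax_top qgr_top /qgr; lia.
by rewrite mulzK //; lia.
Qed.
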